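(* In $FVB_3$, the elements $$h_0=\big[t_{1,2},[t_{2,3},t_{1,3}]\big],\qquad h_1=\big[t_{1,2},[d_{1,2,3},t_{1,3}]\big]$$ generate a subgroup isomorphic to the free group of rank $2$.
   Context: $FVB_3$ is the group with generators $\sigma_1,\sigma_2,\rho_1,\rho_2$ and defining relations $\sigma_i^2=\rho_i^2=1$ ($i=1,2$), $\sigma_1\sigma_2\sigma_1=\sigma_2\sigma_1\sigma_2$, $\rho_1\rho_2\rho_1=\rho_2\rho_1\rho_2$, $\rho_1\rho_2\sigma_1=\sigma_2\rho_1\rho_2$. Define $\lambda_{1,2}=\rho_1\sigma_1$, $\lambda_{2,3}=\rho_2\sigma_2$, $\lambda_{1,3}=\rho_2\lambda_{1,2}\rho_2$; $t_{i,j}=\lambda_{i,j}^2$ and $d_{1,2,3}=\lambda_{2,3}^{-1}\lambda_{1,2}^{-1}\lambda_{2,3}\lambda_{1,3}$. Commutators are $[g,h]=ghg^{-1}h^{-1}$. *)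

From Stdlib Require Import List.
Import ListNotations.
Set Implicit Arguments.

(* A letter is a generator together with an "inverse" flag. *)
Definition letter (A : Type) := (A * bool)%type.
Definition word (A : Type) := list (letter A).

Definition linv {A : Type} (x : letter A) : letter A := (fst x, negb (snd x)).
Definition winv {A : Type} (w : word A) : word A := rev (map linv w).
Definition gen {A : Type} (a : A) : word A := [(a, false)].
Definition comm {A : Type} (g h : word A) : word A := g ++ h ++ winv g ++ winv h.

(* Equality in the group < A | R > : the smallest equivalence relation on
   words containing free cancellation and deletion of relators in any context,
   i.e. equality modulo the normal closure of R in the free group on A. *)
Inductive pres_eq {A : Type} (R : word A -> Prop) : word A -> word A -> Prop :=
| pe_refl  : forall u, pres_eq R u u
| pe_sym   : forall u v, pres_eq R u v -> pres_eq R v u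
| pe_trans : forall u v w, pres_eq R u v -> pres_eq R v w -> pres_eq R u w
| pe_cancel : forall u v x, pres_eq R (u ++ [x; linv x] ++ v) (u ++ v)
| pe_rel   : forall u v r, R r -> pres_eq R (u ++ r ++ v) (u ++ v).

Definition free_eq {A : Type} : word A -> word A -> Prop := pres_eq (fun _ => False).

Inductive fvb_gen := s1 | s2 | r1 | r2.

Definition FVBw := word fvb_gen.

Definition relator (u v : FVBw) : FVBw := u ++ winv v.

Inductive fvb3_rel : FVBw -> Prop :=
| rel_s1sq : fvb3_rel (relator (gen s1 ++ gen s1) [])
| rel_s2sq : fvb3_rel (relator (gen s2 ++ gen s2) [])
| rel_r1sq : fvb3_rel (relator (gen r1 ++ gen r1) [])
| rel_r2sq : fvb3_rel (relator (gen r2 ++ gen r2) [])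
| rel_sbraid : fvb3_rel (relator (gen s1 ++ gen s2 ++ gen s1) (gen s2 ++ gen s1 ++ gen s2))
| rel_rbraid : fvb3_rel (relator (gen r1 ++ gen r2 ++ gen r1) (gen r2 ++ gen r1 ++ gen r2))
| rel_mixed : fvb3_rel (relator (gen r1 ++ gen r2 ++ gen s1) (gen s2 ++ gen r1 ++ gen r2)).

Definition fvb_eq : FVBw -> FVBw -> Prop := pres_eq fvb3_rel.

Definition lam12 : FVBw := gen r1 ++ gen s1.
Definition lam23 : FVBw := gen r2 ++ gen s2.
Definition lam13 : FVBw := gen r2 ++ lam12 ++ gen r2.
Definition t12 : FVBw := lam12 ++ lam12.
Definition t23 : FVBw := lam23 ++ lam23.
Definition t13 : FVBw := lam13 ++ lam13.
Definition d123 : FVBw := winv lam23 ++ winv lam12 ++ lam23 ++ lam13.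

Definition h0 : FVBw := comm t12 (comm t23 t13).
Definition h1 : FVBw := comm t12 (comm d123 t13).

Definition eval_word {B : Type} (img : B -> FVBw) (u : word B) : FVBw :=
  flat_map (fun x : letter B => if snd x then winv (img (fst x)) else img (fst x)) u.

Definition in_gen_subgroup {B : Type} (img : B -> FVBw) (w : FVBw) : Prop :=
  exists u : word B, fvb_eq w (eval_word img u).

Definition F2w := word bool.

Definition iso_F2_onto (H : FVBw -> Prop) (f : F2w -> FVBw) : Prop :=
  (forall u v, free_eq u v -> fvb_eq (f u) (f v)) /\
  (forall u v, fvb_eq (f (u ++ v)) (f u ++ f v)) /\
  (forall u v, fvb_eq (f u) (f v) -> free_eq u v) /\
  (forall w, H w <-> exists u, fvb_eq w (f u)).

From Stdlib Require Import List Bool.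
Import ListNotations.

(* We let FVB_3 act, with a cocycle in the free group F(x,y), on
   the six labellings of three strand positions: rho_i and sigma_i both swap
   the labels at positions i, i+1, and every sigma_i also records the free
   generator attached to the ordered pair of labels it crosses
   (x for {1,2} and {2,3}, y for {1,3}, inverted when the pair is reversed).
   The final labelling together with the freely reduced record is invariant
   under the defining relations, hence a function on FVB_3.  Both h0 and h1
   restore the labelling, so on <h0,h1> this invariant is the substitution
   a |-> X_a of two explicit words X_0, X_1 of F(x,y).  These words satisfy a
   small-cancellation condition: in any freely reduced product of X_a^{+-1}
   the sixth letter of each factor survives reduction, so the substitution is
   injective and the evaluation F_2 -> <h0,h1> is an isomorphism. *)

Section Words.
Context {A : Type}.

Lemma linv_linv (x : letter A) : linv (linv x) = x.
Proof. destruct x as [a b]; unfold linv; simpl; rewrite negb_involutive; reflexivity. Qed.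

Lemma winv_cons (x : letter A) (w : word A) : winv (x :: w) = winv w ++ [linv x].
Proof. reflexivity. Qed.

Lemma winv_app (u v : word A) : winv (u ++ v) = winv v ++ winv u.
Proof. unfold winv; rewrite map_app, rev_app_distr; reflexivity. Qed.

Lemma winv_winv (w : word A) : winv (winv w) = w.
Proof.
  induction w as [|x w IH]; [reflexivity|].
  rewrite winv_cons, winv_app, IH; simpl; rewrite linv_linv; reflexivity.
Qed.

Variable R : word A -> Prop.

Lemma pe_ctx (u v : word A) :
  pres_eq R u v -> forall a b, pres_eq R (a ++ u ++ b) (a ++ v ++ b).
Proof.
  induction 1 as [u|u v _ IH|u v w _ IH1 _ IH2|u v x|u v r Hr]; intros a b.
  - apply pe_refl.
  - apply pe_sym, IH.
  - eapply pe_trans; [apply IH1|apply IH2].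
  - rewrite <- !app_assoc, !(app_assoc a u).
    apply pe_cancel.
  - rewrite <- !app_assoc, !(app_assoc a u).
    apply pe_rel, Hr.
Qed.

Lemma pe_cancel_word (w a b : word A) : pres_eq R (a ++ w ++ winv w ++ b) (a ++ b).
Proof.
  revert a b; induction w as [|x w IH]; intros a b; [apply pe_refl|].
  rewrite winv_cons.
  eapply pe_trans; [|apply (pe_cancel R a b x)].
  replace (a ++ (x :: w) ++ (winv w ++ [linv x]) ++ b)
    with ((a ++ [x]) ++ w ++ winv w ++ ([linv x] ++ b))
    by (rewrite <- !app_assoc; reflexivity).
  replace (a ++ [x; linv x] ++ b) with ((a ++ [x]) ++ ([linv x] ++ b))
    by (rewrite <- !app_assoc; reflexivity).
  apply IH.
Qed.
End Words.

(* Substitution of words for generators, of which [eval_word] is the instance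
   with values in FVB_3. *)
Section Substitution.
Context {B A : Type} (img : B -> word A).

Definition subst (u : word B) : word A :=
  flat_map (fun x : letter B => if snd x then winv (img (fst x)) else img (fst x)) u.

Lemma subst_app (u v : word B) : subst (u ++ v) = subst u ++ subst v.
Proof. apply flat_map_app. Qed.

Lemma subst_linv (x : letter B) : subst [linv x] = winv (subst [x]).
Proof.
  destruct x as [b []]; unfold subst, linv; simpl; rewrite !app_nil_r, ?winv_winv;
    reflexivity.
Qed.

Lemma subst_winv (u : word B) : subst (winv u) = winv (subst u).
Proof.
  induction u as [|x u IH]; [reflexivity|].
  rewrite winv_cons, subst_app, IH, subst_linv.
  change (x :: u) with ([x] ++ u); rewrite subst_app, winv_app; reflexivity.
Qed.

Lemma subst_free (R : word A -> Prop) (u v : word B) :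
  free_eq u v -> pres_eq R (subst u) (subst v).
Proof.
  induction 1 as [u|u v _ IH|u v w _ IH1 _ IH2|u v x|u v r []].
  - apply pe_refl.
  - apply pe_sym, IH.
  - eapply pe_trans; [apply IH1|apply IH2].
  - change [x; linv x] with ([x] ++ [linv x]).
    rewrite !subst_app, subst_linv, <- app_assoc.
    apply pe_cancel_word.
Qed.
End Substitution.

Section FreeReduction.
Context {A : Type} (dec : forall a b : A, {a = b} + {a <> b}).

Definition letter_dec (x y : letter A) : {x = y} + {x <> y}.
Proof. unfold letter; decide equality; apply Bool.bool_dec. Defined.
Arguments letter_dec : simpl never.

Definition push (x : letter A) (s : word A) : word A :=
  match s with
  | y :: s' => if letter_dec y (linv x) then s' else x :: s
  | [] => [x]
  end.

Definition reduce_onto (s a : word A) : word A := fold_right push s a.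
Definition reduce (w : word A) : word A := reduce_onto [] w.

Fixpoint is_reduced (w : word A) : bool :=
  match w with
  | x :: ((y :: _) as w') => if letter_dec y (linv x) then false else is_reduced w'
  | _ => true
  end.
Definition reduced (w : word A) : Prop := is_reduced w = true.

Lemma reduced_cons (x y : letter A) (w : word A) :
  reduced (x :: y :: w) <-> y <> linv x /\ reduced (y :: w).
Proof.
  unfold reduced; simpl; destruct (letter_dec y (linv x)); intuition congruence.
Qed.

Lemma reduced_tail (x : letter A) (w : word A) : reduced (x :: w) -> reduced w.
Proof. destruct w as [|y w]; [reflexivity|]. intros H; apply reduced_cons in H; tauto. Qed.

Lemma reduced_suffix (u v : word A) : reduced (u ++ v) -> reduced v.
Proof. induction u as [|x u IH]; [auto|]. intros H; apply IH, (reduced_tail x), H. Qed.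

Lemma reduced_glue (u : word A) (c : letter A) (v : word A) :
  reduced (u ++ [c]) -> reduced (c :: v) -> reduced (u ++ c :: v).
Proof.
  induction u as [|x [|y u] IH]; intros Hu Hv; [exact Hv| |].
  - apply reduced_cons in Hu; apply reduced_cons; tauto.
  - simpl in Hu |- *; apply reduced_cons in Hu; apply reduced_cons; split; [tauto|].
    apply IH; tauto.
Qed.

Lemma push_reduced (x : letter A) (s : word A) : reduced s -> reduced (push x s).
Proof.
  destruct s as [|y s]; [reflexivity|]; simpl.
  destruct (letter_dec y (linv x)) as [E|E]; intros H.
  - apply (reduced_tail y), H.
  - apply reduced_cons; auto.
Qed.

Lemma reduce_onto_reduced (s a : word A) : reduced s -> reduced (reduce_onto s a).
Proof. induction a as [|x a IH]; simpl; auto using push_reduced. Qed.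

Lemma reduce_reduced (w : word A) : reduced (reduce w).
Proof. apply reduce_onto_reduced; reflexivity. Qed.

Lemma push_linv (x : letter A) (s : word A) : reduced s -> push x (push (linv x) s) = s.
Proof.
  destruct s as [|y s]; simpl; intros H.
  - destruct (letter_dec (linv x) (linv x)); congruence.
  - rewrite linv_linv.
    destruct (letter_dec y x) as [->|E]; simpl.
    + destruct s as [|z s]; [reflexivity|].
      apply reduced_cons in H as [Hz _]; simpl.
      destruct (letter_dec z (linv x)); congruence.
    + destruct (letter_dec (linv x) (linv x)); congruence.
Qed.

Lemma reduce_onto_push (s : word A) (x : letter A) (t : word A) :
  reduced s -> reduce_onto s (push x t) = push x (reduce_onto s t).
Proof.
  intros Hs; destruct t as [|y t]; [reflexivity|]; simpl.
  destruct (letter_dec y (linv x)) as [->|E]; [|reflexivity].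
  rewrite push_linv; auto using reduce_onto_reduced.
Qed.

Lemma reduce_onto_reduce (s a : word A) :
  reduced s -> reduce_onto s (reduce a) = reduce_onto s a.
Proof.
  intros Hs; induction a as [|x a IH]; [reflexivity|].
  unfold reduce in *; simpl; rewrite reduce_onto_push, IH; auto.
Qed.

Lemma reduce_app (u v : word A) : reduce (u ++ v) = reduce_onto (reduce v) u.
Proof. unfold reduce, reduce_onto; apply fold_right_app. Qed.

Lemma reduce_id (w : word A) : reduced w -> reduce w = w.
Proof.
  induction w as [|x w IH]; intros H; [reflexivity|].
  change (reduce (x :: w)) with (push x (reduce w)).
  rewrite IH by exact (reduced_tail x w H).
  destruct w as [|y w]; [reflexivity|]; simpl.
  apply reduced_cons in H as [H _]; destruct (letter_dec y (linv x)); congruence.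
Qed.

Lemma reduce_reduce_l (u v : word A) : reduce (u ++ v) = reduce (reduce u ++ v).
Proof. rewrite !reduce_app, reduce_onto_reduce; auto using reduce_reduced. Qed.

Lemma reduce_reduce_r (u v : word A) : reduce (u ++ v) = reduce (u ++ reduce v).
Proof. rewrite !reduce_app, (reduce_id (reduce v)); auto using reduce_reduced. Qed.

Lemma reduce_inv_r (w : word A) : reduce (w ++ winv w) = [].
Proof.
  induction w as [|x w IH]; [reflexivity|].
  rewrite winv_cons; change ((x :: w) ++ winv w ++ [linv x]) with ([x] ++ w ++ winv w ++ [linv x]).
  rewrite (app_assoc w), (reduce_reduce_r [x]), (reduce_reduce_l (w ++ winv w)), IH; simpl.
  destruct (letter_dec (linv x) (linv x)); congruence.
Qed.

Lemma reduce_delete (u m v : word A) :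
  reduce m = [] -> reduce (u ++ m ++ v) = reduce (u ++ v).
Proof.
  intros Hm; rewrite (reduce_reduce_r u), (reduce_reduce_l m), Hm.
  simpl; rewrite <- reduce_reduce_r; reflexivity.
Qed.

Lemma pe_reduce (R : word A -> Prop) (w : word A) : pres_eq R w (reduce w).
Proof.
  induction w as [|x w IH]; [apply pe_refl|].
  change (reduce (x :: w)) with (push x (reduce w)).
  pose proof (pe_ctx R _ _ IH [x] []) as Hx; rewrite !app_nil_r in Hx.
  eapply pe_trans; [exact Hx|].
  destruct (reduce w) as [|y s]; [apply pe_refl|]; simpl.
  destruct (letter_dec y (linv x)) as [->|_]; [|apply pe_refl].
  apply (pe_cancel R [] s x).
Qed.

Lemma free_eq_of_reduce (u v : word A) : reduce (u ++ winv v) = [] -> free_eq u v.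
Proof.
  intros H.
  pose proof (pe_ctx _ _ _ (pe_reduce (fun _ => False) (u ++ winv v)) [] v) as P.
  rewrite H in P; simpl in P; rewrite <- app_assoc in P.
  eapply pe_trans; [|exact P].
  pose proof (pe_cancel_word (fun _ => False) (winv v) u []) as Q.
  rewrite winv_winv, !app_nil_r in Q.
  apply pe_sym, Q.
Qed.
End FreeReduction.

Section ActionInvariant.
Context {A C S : Type} (decC : forall a b : C, {a = b} + {a <> b}).
Variable step : S -> letter A -> S * word C.

Fixpoint run (t : S) (w : word A) : S * word C :=
  match w with
  | [] => (t, [])
  | x :: w' => let p := step t x in let q := run (fst p) w' in (fst q, snd p ++ snd q)
  end.

Lemma run_fst_app (t : S) (u v : word A) : fst (run t (u ++ v)) = fst (run (fst (run t u)) v).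
Proof. revert t; induction u; intros; simpl; auto. Qed.

Lemma run_snd_app (t : S) (u v : word A) :
  snd (run t (u ++ v)) = snd (run t u) ++ snd (run (fst (run t u)) v).
Proof. revert t; induction u; intros; simpl; auto. rewrite IHu, app_assoc; reflexivity. Qed.

Hypothesis step_linv : forall t x,
  fst (step (fst (step t x)) (linv x)) = t /\
  snd (step (fst (step t x)) (linv x)) = winv (snd (step t x)).

Lemma run_winv (t : S) (w : word A) :
  fst (run (fst (run t w)) (winv w)) = t /\
  snd (run (fst (run t w)) (winv w)) = winv (snd (run t w)).
Proof.
  revert t; induction w as [|x w IH]; intros t; [split; reflexivity|].
  destruct (IH (fst (step t x))) as [H1 H2].
  destruct (step_linv t x) as [S1 S2].
  simpl; rewrite winv_cons, run_fst_app, run_snd_app, H1, H2; simpl.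
  rewrite S1, S2, app_nil_r, winv_app; split; reflexivity.
Qed.

Lemma run_subst {B : Type} (img : B -> word A) (t0 : S) :
  (forall b, fst (run t0 (img b)) = t0) ->
  forall u, fst (run t0 (subst img u)) = t0 /\
            snd (run t0 (subst img u)) = subst (fun b => snd (run t0 (img b))) u.
Proof.
  intros Hfix; induction u as [|[b inv] u [IH1 IH2]]; [split; reflexivity|].
  change (subst img ((b, inv) :: u))
    with ((if inv then winv (img b) else img b) ++ subst img u).
  change (subst (fun b => snd (run t0 (img b))) ((b, inv) :: u))
    with ((if inv then winv (snd (run t0 (img b))) else snd (run t0 (img b)))
          ++ subst (fun b => snd (run t0 (img b))) u).
  rewrite run_fst_app, run_snd_app.
  destruct inv.
  - destruct (run_winv t0 (img b)) as [W1 W2]; rewrite Hfix in W1, W2.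
    rewrite W1, W2, IH1, IH2; split; reflexivity.
  - rewrite Hfix, IH1, IH2; split; reflexivity.
Qed.

Definition observe (t : S) (w : word A) : S * word C :=
  (fst (run t w), reduce decC (snd (run t w))).

Lemma observe_delete (t : S) (u m v : word A) :
  fst (run (fst (run t u)) m) = fst (run t u) ->
  reduce decC (snd (run (fst (run t u)) m)) = [] ->
  observe t (u ++ m ++ v) = observe t (u ++ v).
Proof.
  intros Hfix Hnull; unfold observe.
  rewrite !run_snd_app, !run_fst_app, Hfix.
  f_equal; apply reduce_delete, Hnull.
Qed.

Variable R : word A -> Prop.
Hypothesis relator_trivial : forall t r,
  R r -> fst (run t r) = t /\ reduce decC (snd (run t r)) = [].

Theorem observe_invariant (u v : word A) :
  pres_eq R u v -> forall t, observe t u = observe t v.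
Proof.
  induction 1 as [u|u v _ IH|u v w _ IH1 _ IH2|u v x|u v r Hr]; intros t.
  - reflexivity.
  - symmetry; apply IH.
  - rewrite IH1; apply IH2.
  - destruct (run_winv (fst (run t u)) [x]) as [H1 H2].
    change [x; linv x] with ([x] ++ winv [x]).
    apply observe_delete.
    + rewrite run_fst_app; exact H1.
    + rewrite run_snd_app, H2; apply reduce_inv_r.
  - destruct (relator_trivial (fst (run t u)) r Hr) as [H1 H2].
    apply observe_delete; assumption.
Qed.
End ActionInvariant.

(* Each reduced image [reduce (X^{+-1})] is split as
   [head x ++ pivot x :: tail x]; if for every non-cancelling pair x y the
   reduction of [tail x ++ head y] leaves both pivots in place, then the
   pivots of all factors of a reduced word survive in its image, so no
   nonempty reduced word maps to the identity. *)
Section SmallCancellation.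
Context {B C : Type} (decB : forall a b : B, {a = b} + {a <> b})
  (decC : forall a b : C, {a = b} + {a <> b}) (X : B -> word C).

Lemma subst_cons (x : letter B) (u : word B) : subst X (x :: u) = subst X [x] ++ subst X u.
Proof. change (x :: u) with ([x] ++ u); apply subst_app. Qed.

Lemma subst_push (x : letter B) (s : word B) :
  reduce decC (subst X (push decB x s)) = reduce decC (subst X (x :: s)).
Proof.
  destruct s as [|y s]; [reflexivity|].
  change (push decB x (y :: s)) with (if letter_dec decB y (linv x) then s else x :: y :: s).
  destruct (letter_dec decB y (linv x)) as [->|_]; [|reflexivity].
  rewrite (subst_cons x), (subst_cons (linv x)), subst_linv, app_assoc.
  symmetry; apply (reduce_delete decC []), reduce_inv_r.
Qed.

Lemma subst_reduce (w : word B) :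
  reduce decC (subst X (reduce decB w)) = reduce decC (subst X w).
Proof.
  induction w as [|x w IH]; [reflexivity|].
  change (reduce decB (x :: w)) with (push decB x (reduce decB w)).
  rewrite subst_push, (subst_cons x (reduce decB w)), (subst_cons x w).
  rewrite (reduce_reduce_r _ (subst X [x])), IH, <- reduce_reduce_r.
  reflexivity.
Qed.

Variables (head : letter B -> word C) (pivot : letter B -> letter C)
  (tail : letter B -> word C).
Hypothesis factor_split : forall x,
  reduce decC (subst X [x]) = head x ++ pivot x :: tail x.
Hypothesis junction_reduced : forall x y, y <> linv x ->
  reduced decC ((head x ++ pivot x :: reduce decC (tail x ++ head y)) ++ [pivot y]).

Lemma pivot_survives (q : word B) (x : letter B) :
  reduced decB (x :: q) ->
  exists W, reduce decC (subst X (x :: q)) = head x ++ pivot x :: W.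
Proof.
  revert x; induction q as [|y q IH]; intros x Hq.
  - exists (tail x); rewrite <- factor_split; reflexivity.
  - apply reduced_cons in Hq as [Hxy Hq].
    destruct (IH y Hq) as [W HW].
    exists (reduce decC (tail x ++ head y) ++ pivot y :: W).
    rewrite subst_cons, reduce_reduce_r, HW, reduce_reduce_l, factor_split.
    replace ((head x ++ pivot x :: tail x) ++ head y ++ pivot y :: W)
      with ((head x ++ [pivot x]) ++ (tail x ++ head y) ++ pivot y :: W)
      by (rewrite <- !app_assoc; reflexivity).
    rewrite (reduce_reduce_r decC (head x ++ [pivot x])),
      (reduce_reduce_l decC (tail x ++ head y)), <- reduce_reduce_r.
    replace ((head x ++ [pivot x]) ++ reduce decC (tail x ++ head y) ++ pivot y :: W)
      with ((head x ++ pivot x :: reduce decC (tail x ++ head y)) ++ pivot y :: W)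
      by (rewrite <- !app_assoc; reflexivity).
    rewrite reduce_id; [rewrite <- app_assoc; reflexivity|].
    apply reduced_glue.
    + apply junction_reduced, Hxy.
    + apply (reduced_suffix decC (head y)); rewrite <- HW; apply reduce_reduced.
Qed.

Lemma subst_reduced_trivial (q : word B) :
  reduced decB q -> reduce decC (subst X q) = [] -> q = [].
Proof.
  destruct q as [|x q]; [reflexivity|]; intros Hq Htriv.
  destruct (pivot_survives q x Hq) as [W HW].
  rewrite HW in Htriv; destruct (head x); discriminate.
Qed.

Theorem subst_injective (u v : word B) :
  reduce decC (subst X u) = reduce decC (subst X v) -> free_eq u v.
Proof.
  intros Huv; apply (free_eq_of_reduce decB).
  apply subst_reduced_trivial; [apply reduce_reduced|].
  rewrite subst_reduce, subst_app, subst_winv, reduce_reduce_l, Huv, <- reduce_reduce_l.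
  apply reduce_inv_r.
Qed.
End SmallCancellation.

Inductive labelling := P123 | P132 | P213 | P231 | P312 | P321.

Definition labels (t : labelling) : nat * nat * nat :=
  match t with
  | P123 => (1,2,3) | P132 => (1,3,2) | P213 => (2,1,3)
  | P231 => (2,3,1) | P312 => (3,1,2) | P321 => (3,2,1)
  end.

Definition swap1 (t : labelling) : labelling :=
  match t with
  | P123 => P213 | P132 => P312 | P213 => P123
  | P231 => P321 | P312 => P132 | P321 => P231
  end.

Definition swap2 (t : labelling) : labelling :=
  match t with
  | P123 => P132 | P132 => P123 | P213 => P231
  | P231 => P213 | P312 => P321 | P321 => P312
  end.

Definition gen_x : letter bool := (false, false).
Definition gen_y : letter bool := (true, false).

Definition crossing (ab : nat * nat) : word bool :=
  match ab with
  | (1,2) | (2,3) => [gen_x]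
  | (2,1) | (3,2) => [linv gen_x]
  | (1,3) => [gen_y]
  | (3,1) => [linv gen_y]
  | _ => []
  end.

Definition left_pair (t : labelling) : nat * nat := let '(a, b, _) := labels t in (a, b).
Definition right_pair (t : labelling) : nat * nat := let '(_, b, c) := labels t in (b, c).

Definition fvb_step (t : labelling) (x : letter fvb_gen) : labelling * word bool :=
  match fst x with
  | r1 => (swap1 t, [])
  | r2 => (swap2 t, [])
  | s1 => (swap1 t, crossing (left_pair (swap1 t)))
  | s2 => (swap2 t, crossing (right_pair (swap2 t)))
  end.

(* Every generator is an involution on labellings, and a reversed crossing
   emits the inverse generator. *)
Lemma fvb_step_linv (t : labelling) (x : letter fvb_gen) :
  fst (fvb_step (fst (fvb_step t x)) (linv x)) = t /\
  snd (fvb_step (fst (fvb_step t x)) (linv x)) = winv (snd (fvb_step t x)).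
Proof. destruct t, x as [[] []]; split; reflexivity. Qed.

Lemma fvb_relators_trivial (t : labelling) (r : FVBw) :
  fvb3_rel r ->
  fst (run fvb_step t r) = t /\ reduce Bool.bool_dec (snd (run fvb_step t r)) = [].
Proof. intros []; destruct t; split; vm_compute; reflexivity. Qed.

(* The generators h0, h1 fix the identity labelling; the reduced words they
   emit are X_0 = x^4 y^2 x^-2 y^-2 x^-2 y^2 x^2 y^-2 x^-2 and
   X_1 = x y^2 x y^-2 x^-2 y^2 x^-1 y^-2 x. *)
Definition h_gen (b : bool) : FVBw := if b then h1 else h0.
Definition h_image (b : bool) : word bool := snd (run fvb_step P123 (h_gen b)).

Lemma h_gen_fixes (b : bool) : fst (run fvb_step P123 (h_gen b)) = P123.
Proof. destruct b; vm_compute; reflexivity. Qed.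

Lemma observe_h_words (u : F2w) :
  observe Bool.bool_dec fvb_step P123 (subst h_gen u) =
  (P123, reduce Bool.bool_dec (subst h_image u)).
Proof.
  destruct (run_subst fvb_step fvb_step_linv h_gen P123 h_gen_fixes u) as [H1 H2].
  unfold observe; rewrite H1, H2; reflexivity.
Qed.

(* The small-cancellation data for X_0^{+-1}, X_1^{+-1}: each reduced image
   has length at least 6 and its sixth letter is the pivot. *)
Definition image_of (x : letter bool) : word bool := reduce Bool.bool_dec (subst h_image [x]).
Definition h_head (x : letter bool) : word bool := firstn 5 (image_of x).
Definition h_pivot (x : letter bool) : letter bool := nth 5 (image_of x) gen_x.
Definition h_tail (x : letter bool) : word bool := skipn 6 (image_of x).

Lemma h_split (x : letter bool) :
  reduce Bool.bool_dec (subst h_image [x]) = h_head x ++ h_pivot x :: h_tail x.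
Proof. destruct x as [[] []]; vm_compute; reflexivity. Qed.

Lemma h_junction (x y : letter bool) : y <> linv x ->
  reduced Bool.bool_dec
    ((h_head x ++ h_pivot x :: reduce Bool.bool_dec (h_tail x ++ h_head y)) ++ [h_pivot y]).
Proof.
  destruct x as [[] []], y as [[] []]; intros Hxy;
    try (exfalso; apply Hxy; reflexivity); vm_compute; reflexivity.
Qed.

Theorem mainTheorem8 :
  exists f : F2w -> FVBw,
    iso_F2_onto (in_gen_subgroup (fun b : bool => if b then h1 else h0)) f.
Proof.
  exists (subst h_gen); split; [|split; [|split]].
  - intros u v; apply subst_free.
  - intros u v; rewrite subst_app; apply pe_refl.
  - intros u v Huv.
    pose proof (observe_invariant Bool.bool_dec fvb_step fvb_step_linv fvb3_rel
                  fvb_relators_trivial _ _ Huv P123) as Hobs.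
    rewrite !observe_h_words in Hobs; injection Hobs as Himg.
    exact (subst_injective Bool.bool_dec Bool.bool_dec h_image h_head h_pivot h_tail
             h_split h_junction u v Himg).
  - intros w; reflexivity.
Qed.
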